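(* Assume the payoffs are normalized so that $T=1$, $S=0$ (hence $1>R>\tfrac12$ and $R>P>0$), and let $\bar\alpha>0$. Put $\bar\beta=-\bar\alpha-R^{-1}$. Among all memory-one strategies $\mathbf p\in[0,1]^4$ whose X Press-Dyson vector has the form $\mathbf p-(1,1,0,0)=\gamma(\bar\alpha\mathbf S_X+\bar\beta\mathbf S_Y+\mathbf 1)$ with $\gamma>0$, the one with the largest $\gamma$ (the associated agreeable zero-determinant top strategy) is $$\mathbf p=\Big(1,\ \frac{2R-1}{R(\bar\alpha+1)},\ 1,\ \frac{R-P}{R(\bar\alpha+1)}\Big).$$
   Context: Iterated Prisoner's Dilemma with normalized payoffs $T=1>R>P>S=0$ and $2R>1$; outcomes ordered $cc,cd,dc,dd$ (first letter X's play, second Y's); payoff vectors $\mathbf S_X=(R,0,1,P)$, $\mathbf S_Y=(R,1,0,P)$, $\mathbf 1=(1,1,1,1)$. A memory-one strategy for X is $\mathbf p=(p_1,\dots,p_4)\in[0,1]^4$, $p_i$ being the probability X plays $c$ after outcome $i$ of the previous round; its X Press-Dyson vector is $\tilde{\mathbf p}=\mathbf p-(1,1,0,0)$. *)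

From mathcomp Require Import all_boot all_order all_algebra.
Set Implicit Arguments. Unset Strict Implicit. Unset Printing Implicit Defensive.
Import Order.TTheory GRing.Theory Num.Theory.
Local Open Scope ring_scope.

(* Vectors indexed by outcomes cc, cd, dc, dd (indices 0,1,2,3). *)
Definition vec4 (F : ringType) (a b c d : F) : 'rV[F]_4 :=
  \row_(i < 4) nth 0 [:: a; b; c; d] i.

(* Normalized payoffs T = 1, S = 0; Rw is the reward R, Pp the punishment P. *)
Definition S_X (F : ringType) (Rw Pp : F) : 'rV[F]_4 := vec4 Rw 0 1 Pp.
Definition S_Y (F : ringType) (Rw Pp : F) : 'rV[F]_4 := vec4 Rw 1 0 Pp.
Definition one4 (F : ringType) : 'rV[F]_4 := vec4 1 1 1 1.

Definition memory_one (F : realDomainType) (p : 'rV[F]_4) : Prop :=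
  forall i : 'I_4, 0 <= p ord0 i <= 1.

Definition PD_X (F : ringType) (p : 'rV[F]_4) : 'rV[F]_4 := p - vec4 1 1 0 0.

Definition ZD_form (F : realDomainType) (Rw Pp a b g : F) (p : 'rV[F]_4) : Prop :=
  memory_one p /\ 0 < g /\
  PD_X p = g *: (a *: S_X Rw Pp + b *: S_Y Rw Pp + one4 F).

(** With [bbar = - abar - 1/R] the cc-entry of the Press-Dyson vector vanishes, and
    the remaining entries are [gamma (1 - abar - 1/R)], [gamma (abar + 1)] and
    [gamma (1 - P/R)].  The dc-entry [p3 = gamma (abar + 1)] must not exceed [1], so
    [gamma <= 1/(abar + 1)]; this value is attained, and since [p] is an affine
    function of [gamma], it determines the strategy. *)
From mathcomp Require Import all_boot all_order all_algebra.
From mathcomp Require Import ring lra.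
Import Order.TTheory GRing.Theory Num.Theory.
Local Open Scope ring_scope.

Definition zd_strategy {F : nzRingType} (Rw Pp a b g : F) : 'rV[F]_4 :=
  vec4 (1 + g * ((a + b) * Rw + 1)) (1 + g * (b + 1))
       (g * (a + 1)) (g * ((a + b) * Pp + 1)).

Lemma PD_X_eq_zd (F : comNzRingType) (Rw Pp a b g : F) (p : 'rV[F]_4) :
  PD_X p = g *: (a *: S_X Rw Pp + b *: S_Y Rw Pp + one4 F) <->
  p = zd_strategy Rw Pp a b g.
Proof.
have -> : zd_strategy Rw Pp a b g =
          vec4 1 1 0 0 + g *: (a *: S_X Rw Pp + b *: S_Y Rw Pp + one4 F).
  apply/matrixP => i j; rewrite (ord1 i) !mxE.
  by case: j => [[|[|[|[|j]]]] //= _]; ring.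
by rewrite /PD_X; split => [<-|->]; rewrite addrC ?subrK ?addKr.
Qed.

Lemma memory_one_vec4 (F : realDomainType) (a b c d : F) :
  0 <= a <= 1 -> 0 <= b <= 1 -> 0 <= c <= 1 -> 0 <= d <= 1 ->
  memory_one (vec4 a b c d).
Proof. by move=> ? ? ? ? [[|[|[|[|i]]]] i_lt4]; rewrite mxE. Qed.

Lemma zd_gamma_le (F : realFieldType) (Rw Pp a b g : F) :
  0 < a + 1 -> memory_one (zd_strategy Rw Pp a b g) -> g <= (a + 1)^-1.
Proof.
move=> a1_gt0 /(_ 2); rewrite mxE /= => /andP [_ p3_le1].
by rewrite -(ler_pM2r a1_gt0) mulVf ?gt_eqF.
Qed.

Lemma divr_in01 (F : realFieldType) (x y : F) :
  0 <= x -> x <= y -> 0 < y -> 0 <= x / y <= 1.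
Proof.
move=> x_ge0 x_le_y y_gt0.
by rewrite divr_ge0 ?(ltW y_gt0) //= ler_pdivrMr // mul1r.
Qed.

Theorem proposition2p6 (F : realFieldType) (Rw Pp abar : F)
  (hR1 : Rw < 1) (hR2 : 1 < 2 * Rw) (hRP : Pp < Rw) (hP0 : 0 < Pp)
  (ha : 0 < abar) :
  let bbar := - abar - Rw^-1 in
  let p0 := vec4 1 ((2 * Rw - 1) / (Rw * (abar + 1))) 1
                 ((Rw - Pp) / (Rw * (abar + 1))) in
  exists g0 : F,
    ZD_form Rw Pp abar bbar g0 p0 /\
    (forall (p : 'rV[F]_4) (g : F), ZD_form Rw Pp abar bbar g p ->
       g <= g0 /\ (g = g0 -> p = p0)).
Proof.
move=> bbar p0.
have Rw_gt0 : 0 < Rw by lra.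
have a1_gt0 : 0 < abar + 1 by lra.
have top_strategy : zd_strategy Rw Pp abar bbar (abar + 1)^-1 = p0.
  by rewrite /zd_strategy /p0 /bbar; congr vec4; field; rewrite !gt_eqF.
exists (abar + 1)^-1; split.
  split; [|split; last by apply/PD_X_eq_zd].
  - have RA_gt0 : 0 < Rw * (abar + 1) by rewrite mulr_gt0.
    by apply: memory_one_vec4; rewrite ?lexx ?ler01 // divr_in01 //; nra.
  - by rewrite invr_gt0.
move=> p g [p_mem [_ /PD_X_eq_zd p_zd]].
rewrite p_zd in p_mem *.
by split; [exact: zd_gamma_le p_mem | move=> ->].
Qed.
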